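(* Let $n\geq 2$ be an integer, let $c,\varepsilon\in[0,1]$, and let $G$ be a connected graph on $n$ vertices. Assume that $G$ contains no empty bipartite graph with sides of size at least $c\cdot n$, i.e. there are no two disjoint vertex sets $X,Y\subseteq V(G)$ with $|X|,|Y|\geq c\cdot n$ such that no edge of $G$ joins a vertex of $X$ to a vertex of $Y$. Assume moreover that every vertex $x$ of $G$ has closed degree $\overline{d(x)}\leq \varepsilon\cdot n$. Then for every vertex $x$ of $G$ there is an induced path on $k$ vertices in $G$ having $x$ as an endpoint, with $k\geq \frac{1}{2(\varepsilon+c)}$.
   Context: All graphs are finite and simple. The closed degree of a vertex $x$ is $\overline{d(x)}=d(x)+1=|N[x]|$, where $N[x]=\{x\}\cup\{y: xy\in E(G)\}$ is the closed neighborhood. An induced path on $k$ vertices ($P_k$) is a set of $k$ vertices $v_1,\dots,v_k$ such that $v_iv_j$ is an edge if and only if $|i-j|=1$; ''starting in $x$'' means $v_1=x$. *)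

From HB Require Import structures.
From mathcomp Require Import all_boot all_order all_algebra.
Set Implicit Arguments. Unset Strict Implicit. Unset Printing Implicit Defensive.
Import Order.TTheory GRing.Theory Num.Theory.

Definition simple_graph (T : finType) (e : rel T) : Prop :=
  symmetric e /\ irreflexive e.

Definition connected_graph (T : finType) (e : rel T) : Prop :=
  forall x y : T, connect e x y.

Definition closed_nbhd (T : finType) (e : rel T) (x : T) : {set T} :=
  x |: [set y | e x y].
Definition closed_degree (T : finType) (e : rel T) (x : T) : nat :=
  #|closed_nbhd e x|.

(* p = [v_1; ...; v_k] is an induced path starting in x: v_1 = x, the v_i are
   distinct, and v_i v_j is an edge iff |i - j| = 1.  (The default element x
   of [nth] is irrelevant since only indices < size p are used.) *)
Definition induced_path_from (T : finType) (e : rel T) (x : T) (p : seq T) : Prop :=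
  [/\ head x p = x, 0 < size p, uniq p &
  forall i j : nat, i < size p -> j < size p ->
    e (nth x p i) (nth x p j) = ((i.+1 == j) || (j.+1 == i))].

From HB Require Import structures.
From mathcomp Require Import all_boot all_order all_algebra.
From mathcomp Require Import lra zify.
Import Order.TTheory GRing.Theory Num.Theory.

(* We grow an induced path from x greedily.  Besides the path p
   with last vertex v we keep a connected vertex set C containing v, such that
   no other vertex of C lies on p or is adjacent to an earlier vertex of p
   ([extendable]).  Removing the closed neighbourhood N[v] from C costs at most
   the degree bound d; as long as |C| >= d + 3m, the absence of an empty
   bipartite pair with sides >= m yields a component K of C \ N[v] missing
   fewer than m of its vertices ([large_component]), and a neighbour w of v
   adjacent to K ([neighbour_meets_component]).  Then p w together with
   {w} u K is again extendable, and C lost at most d + m vertices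
   ([extendable_step]).  Iterating from ([:: x], V(G)) gives an induced path
   q with n <= |q| (d + m) + 2m ([extendable_long_path]); with m = c n and
   d = eps n this is the bound when c <= 1/4, while for c > 1/4 a single edge
   at x already suffices. *)

Set Implicit Arguments. Unset Strict Implicit. Unset Printing Implicit Defensive.

Lemma path_exit (T : finType) (r : rel T) (K : {set T}) (a : T) (p : seq T) :
  path r a p -> a \in K -> last a p \notin K ->
  exists b c, [/\ b \in K, c \notin K & r b c].
Proof.
elim: p a => [|b p IH] a /=; first by move=> _ ->.
case/andP=> rab Hp aK Hlast.
case bK: (b \in K); first exact: IH Hp bK Hlast.
by exists a, b; rewrite aK bK.
Qed.

Section InducedSubgraphs.

Variables (T : finType) (e : rel T).
Hypothesis e_sym : symmetric e.

Definition induced (S : {set T}) : rel T :=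
  fun a b => [&& a \in S, b \in S & e a b].

Definition component (S : {set T}) (z : T) : {set T} :=
  [set y | connect (induced S) z y].

Definition connected_in (S : {set T}) : Prop :=
  forall a b, a \in S -> b \in S -> connect (induced S) a b.

Lemma induced_sym (S : {set T}) : symmetric (induced S).
Proof. by move=> a b; rewrite /induced e_sym andbCA. Qed.

Lemma component_self (S : {set T}) (z : T) : z \in component S z.
Proof. by rewrite inE connect0. Qed.

Lemma component_closed (S : {set T}) (z a b : T) :
  a \in component S z -> induced S a b -> b \in component S z.
Proof. by rewrite !inE => za ab; apply: connect_trans za (connect1 ab). Qed.

Lemma component_sub (S : {set T}) (z : T) : z \in S -> component S z \subset S.
Proof.
move=> zS; apply/subsetP => y; rewrite inE => /connectP [p + ->].
elim: p z zS => [|b p IH] a aS //= /andP [/and3P [_ bS _] Hp].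
exact: IH bS Hp.
Qed.

Lemma connected_in_setU1 (K : {set T}) (w k : T) :
  connected_in K -> k \in K -> e w k -> connected_in (w |: K).
Proof.
move=> connK kK ewk.
have widen a b : connect (induced K) a b -> connect (induced (w |: K)) a b.
  apply: connect_sub => {}a {}b /and3P [aK bK eab]; apply: connect1.
  by rewrite /induced !inE aK bK eab !orbT.
have from_w b : b \in w |: K -> connect (induced (w |: K)) w b.
  rewrite in_setU1 => /orP [/eqP -> | bK]; first exact: connect0.
  apply: connect_trans (widen _ _ (connK _ _ kK bK)).
  by apply: connect1; rewrite /induced !inE eqxx kK ewk orbT.
move=> a b aS bS; apply: connect_trans (from_w _ bS).
by rewrite (sym_connect_sym (induced_sym _)); apply: from_w.
Qed.

Lemma component_connected (S : {set T}) (z : T) :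
  z \in S -> connected_in (component S z).
Proof.
move=> zS; set K := component S z.
have from_z b : b \in K -> connect (induced K) z b.
  rewrite inE => /connectP [p]; elim/last_ind: p b => [|p c IH] b /=.
    by move=> _ ->; exact: connect0.
  rewrite rcons_path last_rcons => /andP [Hp pc] ->.
  have pK : last z p \in K by rewrite inE; apply/connectP; exists p.
  apply: connect_trans (IH _ Hp erefl) (connect1 _).
  by rewrite /induced pK (component_closed pK pc); case/and3P: pc.
move=> a b aK bK; apply: connect_trans (from_z _ bK).
by rewrite (sym_connect_sym (induced_sym _)); apply: from_z.
Qed.

Lemma neighbour_meets_component (C : {set T}) (v z : T) :
  connected_in C -> v \in C -> z \in C :\: closed_nbhd e v ->
  exists w, [/\ w \in C, e v w &
    exists2 k, k \in component (C :\: closed_nbhd e v) z & e w k].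
Proof.
move=> connC vC zD; set D := C :\: closed_nbhd e v; set K := component D z.
have zC : z \in C by move: zD; rewrite inE => /andP [].
have [p Hp last_p] := connectP (connC z v zC vC).
have vK : last z p \notin K.
  rewrite -last_p; apply/negP => /(subsetP (component_sub zD)).
  by rewrite !inE eqxx.
have [b [c [bK cK /and3P [_ cC ebc]]]] := path_exit Hp (component_self D z) vK.
have bD : b \in D := subsetP (component_sub zD) _ bK.
have cN : c \in closed_nbhd e v.
  apply: contraR cK => cN; apply: component_closed bK _.
  by rewrite /induced bD in_setD cN cC ebc.
move: cN; rewrite !inE => /orP [/eqP cv | evc].
  by move: bD; rewrite !inE -cv e_sym ebc orbT.
by exists c; split=> //; exists b; rewrite // e_sym.
Qed.

(* S is a union of components of the subgraph induced on D. *)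
Definition closed_in (D S : {set T}) : bool :=
  (S \subset D) && [forall a in S, forall b in D :\: S, ~~ e a b].

Lemma closed_inP (D S : {set T}) :
  reflect (S \subset D /\ forall a b, a \in S -> b \in D :\: S -> ~~ e a b)
          (closed_in D S).
Proof.
apply: (iffP andP) => [[SD /forall_inP H] | [SD H]].
  by split=> // a b aS; move: (H a aS) => /forall_inP; apply.
by split=> //; apply/forall_inP => a aS; apply/forall_inP => b; exact: H.
Qed.

Lemma closed_in_refl (D : {set T}) : closed_in D D.
Proof. by apply/closed_inP; split=> // a b _; rewrite setDv inE. Qed.

Lemma component_closed_in (D : {set T}) (z : T) :
  z \in D -> closed_in D (component D z).
Proof.
move=> zD; apply/closed_inP; split=> [|a b aK]; first exact: component_sub.
rewrite inE => /andP [bK bD]; apply: contra bK => eab.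
apply: (component_closed aK).
by rewrite /induced bD (subsetP (component_sub zD) _ aK).
Qed.

Lemma component_sub_closed (D S : {set T}) (z : T) :
  closed_in D S -> z \in S -> component D z \subset S.
Proof.
move=> /closed_inP [SD closedS] zS; apply/subsetP => y; rewrite inE.
case/connectP=> p + ->; elim: p z zS => [|b p IH] a aS //=.
case/andP=> /and3P [_ bD eab] Hp; apply: IH Hp.
by apply: contraT => bS; have := closedS a b aS; rewrite !inE bS bD eab; apply.
Qed.

Lemma closed_inD (D S K : {set T}) :
  closed_in D S -> closed_in D K -> closed_in D (S :\: K).
Proof.
move=> /closed_inP [SD closedS] /closed_inP [_ closedK].
apply/closed_inP; split=> [|a b]; first exact: subset_trans (subsetDl _ _) SD.
rewrite !inE negb_and negbK => /andP [aK aS] /andP [/orP [bK | bS] bD].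
  by rewrite e_sym; apply: closedK bK _; rewrite !inE aK (subsetP SD).
by apply: closedS aS _; rewrite !inE bS.
Qed.

End InducedSubgraphs.

Section NoEmptyBipartite.

Local Open Scope ring_scope.

Variables (R : realFieldType) (T : finType) (e : rel T).
Hypothesis e_sym : symmetric e.

Definition no_empty_bipartite (m : R) : Prop :=
  ~ (exists X Y : {set T}, [disjoint X & Y] /\
       m <= #|X|%:R /\ m <= #|Y|%:R /\
       (forall x y, x \in X -> y \in Y -> ~~ e x y)).

Variable m : R.
Hypothesis no_bip : no_empty_bipartite m.

(* The pair of empty sets rules out m <= 0. *)
Lemma no_empty_bipartite_gt0 : 0 < m.
Proof.
rewrite real_ltNge ?num_real //; apply/negP => m_le0; apply: no_bip.
exists set0, set0; rewrite -setI_eq0 setI0 cards0.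
by do 3!split=> //; move=> ? ?; rewrite inE.
Qed.

Lemma closed_in_complement_small (D S : {set T}) :
  closed_in e D S -> m <= #|S|%:R -> #|D :\: S|%:R < m.
Proof.
move=> /closed_inP [_ closedS] Sm; rewrite real_ltNge ?num_real //.
apply/negP => DSm; apply: no_bip; exists S, (D :\: S).
split; last by do !split.
by rewrite -setI_eq0 setDE setICA setICr setI0.
Qed.

(* Take a smallest closed subset S of D with |S| >= m
   and z in S: the component K of z lies in S; if |K| >= m then K = S, and
   otherwise S, K, S \ K and D \ S would give |D| < 3m. *)
Lemma large_component (D : {set T}) :
  3 * m <= #|D|%:R -> exists2 z, z \in D & #|D :\: component e D z|%:R < m.
Proof.
move=> Dm; have m_gt0 := no_empty_bipartite_gt0.
pose P k := [exists S : {set T}, [&& closed_in e D S, m <= #|S|%:R & #|S| == k]].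
have exP : exists k, P k.
  by exists #|D|; apply/existsP; exists D; rewrite closed_in_refl eqxx andbT; lra.
case: (ex_minnP exP) => _ /existsP [S /and3P [closedS Sm /eqP <-]] S_min.
have minS S' : closed_in e D S' -> m <= #|S'|%:R -> (#|S| <= #|S'|)%N.
  by move=> ? ?; apply: S_min; apply/existsP; exists S'; apply/and3P.
have [z zS] : exists z, z \in S.
  apply/set0Pn; apply: contraTneq Sm => ->.
  by rewrite cards0 -real_ltNge ?num_real.
have SD : S \subset D by case/andP: closedS.
have zD := subsetP SD _ zS; exists z => //.
set K := component e D z.
have closedK : closed_in e D K := component_closed_in e zD.
have KS : K \subset S := component_sub_closed closedS zS.
have [Km | Km] := boolP (m <= #|K|%:R).
  suff -> : K = S by exact: closed_in_complement_small.
  by apply/eqP; rewrite eqEcard KS minS.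
have SKm : ~~ (m <= #|S :\: K|%:R).
  apply/negP => SKm; move: (minS _ (closed_inD e_sym closedS closedK) SKm).
  apply/negP; rewrite -ltnNge (cardsD1 z S) zS add1n ltnS subset_leq_card //.
  apply/subsetP => y; rewrite !inE => /andP [yK ->]; rewrite andbT.
  by apply: contraNneq yK => ->; exact: connect0.
have DSm := closed_in_complement_small closedS Sm.
have cardD : #|D| = (#|K| + #|S :\: K| + #|D :\: S|)%N.
  by rewrite -(cardsID S D) (setIidPr SD) -(cardsID K S) (setIidPr KS).
move: Dm Km SKm DSm; rewrite cardD !natrD -!real_ltNge ?num_real //; lra.
Qed.

End NoEmptyBipartite.

Section InducedPaths.

Variables (T : finType) (e : rel T).
Hypotheses (e_sym : symmetric e) (e_irr : irreflexive e).

Lemma induced_path_single (x : T) : induced_path_from e x [:: x].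
Proof. by split=> // [] [|i] [|j] //=; rewrite e_irr. Qed.

Lemma induced_path_edge (x y : T) : e x y -> induced_path_from e x [:: x; y].
Proof.
move=> exy; split=> //=.
  by rewrite inE andbT; apply: contraTneq exy => ->; rewrite e_irr.
by case=> [|[|i]] [|[|j]] //=; rewrite ?e_irr // e_sym.
Qed.

Lemma induced_path_rcons (x w : T) (p : seq T) :
  induced_path_from e x p -> w \notin p -> e (last x p) w ->
  (forall u, u \in p -> u != last x p -> ~~ e u w) ->
  induced_path_from e x (rcons p w).
Proof.
move=> [p_head p_gt0 p_uniq p_edges] wp lastw others.
have to_w i : (i < size p)%N -> e (nth x p i) w = (i.+1 == size p).
  move=> ip; have [ilast|ilast] := eqVneq i.+1 (size p).
    by rewrite (_ : i = (size p).-1) ?nth_last -?ilast.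
  apply/negbTE/others; first exact: mem_nth.
  by rewrite -nth_last nth_uniq ?prednK //; apply/eqP; lia.
split.
- by case: p p_head p_gt0 {p_uniq p_edges wp lastw others to_w}.
- by rewrite size_rcons.
- by rewrite rcons_uniq wp.
move=> i j; rewrite size_rcons !ltnS !nth_rcons => il jl.
case: (ltnP i (size p)) => ip; case: (ltnP j (size p)) => jp.
- exact: p_edges.
- have -> : j = size p by lia.
  have -> : ((size p).+1 == i) = false by apply/eqP; lia.
  by rewrite eqxx to_w // orbF.
- have -> : i = size p by lia.
  have -> : ((size p).+1 == j) = false by apply/eqP; lia.
  by rewrite eqxx e_sym to_w.
- have -> : i = size p by lia. have -> : j = size p by lia.
  by rewrite eqxx e_irr; apply/esym/norP; split; apply/eqP; lia.
Qed.

Definition extendable (x : T) (p : seq T) (C : {set T}) : Prop :=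
  [/\ induced_path_from e x p, last x p \in C, connected_in e C &
      forall a u, a \in C -> a != last x p -> u \in p -> u != last x p ->
        (a != u) && ~~ e u a].

Lemma extendable_start (x : T) :
  connected_graph e -> extendable x [:: x] [set: T].
Proof.
move=> connG; split; rewrite ?inE //; first exact: induced_path_single.
  move=> a b _ _; rewrite (eq_connect (e' := e)) ?connG // => u v.
  by rewrite /induced !inE.
by move=> a u _ ax; rewrite inE => /eqP ->; rewrite /= eqxx.
Qed.

Lemma extendable_rcons (x z w k : T) (p : seq T) (C : {set T}) :
  let v := last x p in let K := component e (C :\: closed_nbhd e v) z in
  extendable x p C -> z \in C :\: closed_nbhd e v ->
  w \in C -> e v w -> k \in K -> e w k ->
  extendable x (rcons p w) (w |: K) /\ (#|w |: K| < #|C|)%N.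
Proof.
move=> v K [p_ind vC connC fresh] zD wC evw kK ewk.
have KD : K \subset C :\: closed_nbhd e v := component_sub e zD.
have inK a : a \in K -> [/\ a \in C, a != v & ~~ e v a].
  move=> /(subsetP KD); rewrite /closed_nbhd !inE negb_or.
  by move=> /andP [/andP [? ?] ?].
have wv : w != v by apply: contraTneq evw => ->; rewrite e_irr.
have wK : w \notin K by apply: contraL evw => /inK [].
split; first split.
- apply: induced_path_rcons => //.
    by apply/negP => wp; have := fresh w w wC wv wp wv; rewrite eqxx.
  by move=> u up uv; case/andP: (fresh w u wC wv up uv).
- by rewrite last_rcons setU11.
- exact (connected_in_setU1 e_sym (component_connected e_sym zD) kK ewk).
- rewrite last_rcons => a u; rewrite in_setU1 => /orP [/eqP -> | aK];
    first by rewrite eqxx.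
  move=> _; rewrite mem_rcons in_cons => /orP [/eqP -> | up];
    first by rewrite eqxx.
  have [aC av nva] := inK a aK.
  move=> _; have [-> | uv] := eqVneq u v; first by rewrite av.
  exact: fresh.
- rewrite (cardsD1 v C) vC add1n ltnS subset_leq_card //.
  apply/subsetP => y; rewrite in_setU1 => /orP [/eqP -> | /inK [yC yv _]];
    by rewrite !inE ?wv ?yv.
Qed.

Local Open Scope ring_scope.

Variables (R : realFieldType) (m d : R).
Hypothesis no_bip : no_empty_bipartite e m.
Hypothesis degree_bound : forall v : T, (closed_degree e v)%:R <= d.

Lemma extendable_step (x : T) (p : seq T) (C : {set T}) :
  extendable x p C -> d + 3 * m <= #|C|%:R ->
  exists w C', [/\ extendable x (rcons p w) C', (#|C'| < #|C|)%N &
                  #|C|%:R <= #|C'|%:R + (d + m)].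
Proof.
move=> ext Cm; have [_ vC connC _] := ext.
set v := last x p in vC; set D := C :\: closed_nbhd e v.
have CD : (#|C| <= #|D| + closed_degree e v)%N.
  rewrite -(cardsID (closed_nbhd e v) C) addnC leq_add2l.
  by rewrite subset_leq_card // subsetIr.
have degv := degree_bound v; move: CD; rewrite -(ler_nat R) natrD => CD.
have Dm : 3 * m <= #|D|%:R by lra.
have [z zD DKm] := large_component e_sym no_bip Dm.
have [w [wC evw [k kK ewk]]] := neighbour_meets_component e_sym connC vC zD.
have [ext' C'C] := extendable_rcons ext zD wC evw kK ewk.
set K := component e D z in kK DKm ext' C'C *.
exists w, (w |: K); split=> //.
have DK : (#|D| <= #|w |: K| + #|D :\: K|)%N.
  rewrite -(cardsID K D) (setIidPr (component_sub e zD)) leq_add2r.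
  by rewrite subset_leq_card // subsetUr.
by move: DK; rewrite -(ler_nat R) natrD => DK; lra.
Qed.

Lemma extendable_long_path (x : T) (p : seq T) (C : {set T}) :
  extendable x p C -> exists q, induced_path_from e x q /\
    #|C|%:R + ((size p)%:R - 1) * (d + m) <= (size q)%:R * (d + m) + 2 * m.
Proof.
move=> ext; have [N CN] : exists N, (#|C| < N)%N by exists #|C|.+1.
elim: N p C ext CN => // N IH p C ext CN.
have [Cm | Csmall] := boolP (d + 3 * m <= #|C|%:R); last first.
  exists p; split; first by case: ext.
  by move: Csmall; rewrite -real_ltNge ?num_real // => ?; lra.
have [w [C' [ext' C'C CC']]] := extendable_step ext Cm.
have [q [q_ind q_long]] := IH _ _ ext' (leq_trans C'C CN).
by exists q; split=> //; move: q_long; rewrite size_rcons -addn1 natrD; lra.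
Qed.

End InducedPaths.

Lemma connected_neighbour (T : finType) (e : rel T) (x : T) :
  connected_graph e -> (1 < #|T|)%N -> exists y, e x y.
Proof.
move=> connG T_gt1; have : (0 < #|predC1 x|)%N by rewrite cardC1; lia.
case/card_gt0P => y; rewrite inE => yx.
case/connectP: (connG x y) => [[|z p] /= p_path last_p].
  by rewrite last_p eqxx in yx.
by exists z; case/andP: p_path.
Qed.

Local Open Scope ring_scope.

Theorem theorem3 (R : realFieldType) (n : nat) (c eps : R)
  (T : finType) (e : rel T) :
  (2 <= n)%N ->
  0 <= c <= 1 -> 0 <= eps <= 1 ->
  simple_graph e -> #|T| = n -> connected_graph e ->
  (* no empty bipartite graph with both sides of size >= c n *)
  ~ (exists X Y : {set T}, [disjoint X & Y] /\
       c * n%:R <= #|X|%:R /\ c * n%:R <= #|Y|%:R /\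
       (forall x y, x \in X -> y \in Y -> ~~ e x y)) ->
  (forall x : T, (closed_degree e x)%:R <= eps * n%:R) ->
  forall x : T, exists p : seq T,
    induced_path_from e x p /\ 1 / (2 * (eps + c)) <= (size p)%:R.
Proof.
move=> n_ge2 _ /andP [eps_ge0 _] [e_sym e_irr] cardT connG no_bip deg x.
have cn_gt0 : 0 < c * n%:R := no_empty_bipartite_gt0 no_bip.
have n_gt0 : 0 < n%:R :> R by rewrite ltr0n; lia.
have c_gt0 : 0 < c by move: cn_gt0; rewrite pmulr_lgt0.
have [c_small | c_large] := boolP (c <= 1/4).
  have [q [q_ind q_long]] :=
    extendable_long_path e_sym e_irr no_bip deg (extendable_start e_irr x connG).
  exists q; split=> //; rewrite cardsT cardT /= in q_long.
  have : 1 <= (size q)%:R * (eps + c) + 2 * c by rewrite -(ler_pM2r n_gt0); lra.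
  by rewrite ler_pdivrMr; lra.
have [z exz] : exists z, e x z by apply: connected_neighbour; rewrite ?cardT.
exists [:: x; z]; split; first exact: induced_path_edge.
by rewrite ler_pdivrMr /=; lra.
Qed.
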